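(* Let $m,L,T$ be positive integers with $T \ge (m+1)L-1$, let $k$ be an integer, and let $u_{k-T},u_{k-T+1},\dots,u_k \in \mathbb{R}^m$. Suppose that the signal $u_{[k-T,k-1]}$ is persistently exciting of order $L$. Write the Hankel matrix of $u_{[k-T+1,k]}$ in block form $$\mathcal{H}_L(u_{[k-T+1,k]}) = \begin{bmatrix} H_{11,k} & H_{12,k}\\ H_{21,k} & u_k\end{bmatrix}$$ as described in the context. Then: (i) $\operatorname{rank}\begin{bmatrix} H_{11,k} & H_{12,k}\end{bmatrix} = mL-m$, i.e. $\begin{bmatrix} H_{11,k} & H_{12,k}\end{bmatrix}$ has linearly independent rows; (ii) $mL-1 \le \operatorname{rank}\begin{bmatrix} H_{11,k}\\ H_{21,k}\end{bmatrix} \le mL$; (iii) $mL-1 \le \operatorname{rank}\,\mathcal{H}_L(u_{[k-T+1,k]}) \le mL$.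
   Context: For vectors $u_i\in\mathbb{R}^m$, $u_{[i,j]}$ denotes the stacked vector $(u_i^\top,\dots,u_j^\top)^\top \in \mathbb{R}^{(j-i+1)m}$. The (block) Hankel matrix of depth $L$ of a signal $u_{[k-T+1,k]}$ is the $mL\times(T-L+1)$ matrix $$\mathcal{H}_L(u_{[k-T+1,k]}) = \begin{bmatrix} u_{k-T+1} & u_{k-T+2} & \cdots & u_{k-L+1}\\ u_{k-T+2} & u_{k-T+3} & \cdots & u_{k-L+2}\\ \vdots & \vdots & & \vdots\\ u_{k-T+L} & u_{k-T+L+1} & \cdots & u_k\end{bmatrix},$$ whose $(i,j)$ block entry is $u_{k-T+i+j-1}$ ($i=1,\dots,L$, $j=1,\dots,T-L+1$). It is partitioned as $\begin{bmatrix} H_{11,k} & H_{12,k}\\ H_{21,k} & u_k\end{bmatrix}$, where $H_{11,k}\in\mathbb{R}^{m(L-1)\times(T-L)}$ consists of the first $m(L-1)$ rows and first $T-L$ columns, $H_{12,k}\in\mathbb{R}^{m(L-1)}$ is the first $m(L-1)$ entries of the last column, $H_{21,k}\in\mathbb{R}^{m\times(T-L)}$ is the last $m$ rows of the first $T-L$ columns, and the bottom-right block is $u_k$. The Hankel matrix of $u_{[k-T,k-1]}$ is defined analogously with all indices shifted by $-1$. A signal $u_{[s-T+1,s]}$ is persistently exciting of order $L$ if $\operatorname{rank}\mathcal{H}_L(u_{[s-T+1,s]}) = mL$. *)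

From HB Require Import structures.
From mathcomp Require Import all_boot all_order all_algebra.
From mathcomp Require Import reals.
Set Implicit Arguments. Unset Strict Implicit. Unset Printing Implicit Defensive.
Import Order.TTheory GRing.Theory Num.Theory.
Local Open Scope ring_scope.

(* A row index i < m*p of a block matrix with p blocks of height m:
   block number i %/ m, component i %% m. *)
Lemma mod_ord_proof (m p : nat) (i : 'I_(m * p)) : (i %% m < m)%N.
Proof.
case: m i => [|m] i; last by rewrite ltn_mod.
by case: i => i; rewrite mul0n.
Qed.

Definition mod_ord (m p : nat) (i : 'I_(m * p)) : 'I_m := Ordinal (mod_ord_proof i).

Section Hankel.
Variables (R : realType) (m L T : nat) (u : int -> 'cV[R]_m).

(* Block Hankel matrix of depth L of u_[s-T+1, s]: block (i,j) (1-based) is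
   u_(s-T+i+j-1); here with 0-based block indices i%/m and j. *)
Definition hankel (s : int) : 'M[R]_(m * L, T - L + 1) :=
  \matrix_(i < m * L, j < T - L + 1)
     u (s - T%:Z + 1 + (i %/ m)%N%:Z + j%:Z) (mod_ord i) 0.

Definition H11 (k : int) : 'M[R]_(m * (L - 1), T - L) :=
  \matrix_(i < m * (L - 1), j < T - L)
     u (k - T%:Z + 1 + (i %/ m)%N%:Z + j%:Z) (mod_ord i) 0.

Definition H12 (k : int) : 'cV[R]_(m * (L - 1)) :=
  \col_(i < m * (L - 1))
     u (k - T%:Z + 1 + (i %/ m)%N%:Z + (T - L)%N%:Z) (mod_ord i) 0.

Definition H21 (k : int) : 'M[R]_(m, T - L) :=
  \matrix_(i < m, j < T - L)
     u (k - T%:Z + 1 + (L - 1)%N%:Z + j%:Z) i 0.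

Definition pers_exciting (s : int) : Prop := \rank (hankel s) = (m * L)%N.

End Hankel.

From HB Require Import structures.
From mathcomp Require Import all_boot all_order all_algebra.
From mathcomp Require Import reals.
From mathcomp Require Import zify.
Import Order.TTheory GRing.Theory Num.Theory.
Local Open Scope ring_scope.

(* The upper block row [H11 H12] of H_L(u_[k-T+1,k]) consists of the last
   m(L-1) rows of H_L(u_[k-T,k-1]), and its left block column [H11; H21], i.e.
   its first T-L columns, consists of the last T-L columns of H_L(u_[k-T,k-1]).
   Deleting m rows, resp. one column, from a matrix of full row rank mL lowers
   the rank by at most m, resp. 1. *)

Section RowCover.
Context {F : fieldType} {p n a b : nat}.
Variables (A : 'M[F]_(p, n)) (f : 'I_a -> 'I_p) (g : 'I_b -> 'I_p).
Hypothesis fg_cover : forall i, (exists x, f x = i) \/ (exists y, g y = i).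

Lemma mxrank_rowsub_cover : (\rank A <= \rank (rowsub f A) + \rank (rowsub g A))%N.
Proof.
have sub_adds : (A <= rowsub f A + rowsub g A)%MS.
  apply/row_subP => i.
  case: (fg_cover i) => [[x <-]|[y <-]]; rewrite -!row_rowsub.
    exact: submx_trans (row_sub _ _) (addsmxSl _ _).
  exact: submx_trans (row_sub _ _) (addsmxSr _ _).
apply: leq_trans (mxrankS sub_adds) _.
by case: (mxrank_adds_leqif (rowsub f A) (rowsub g A)).
Qed.

Lemma mxrank_rowsub_cover_lb : (\rank A - b <= \rank (rowsub f A))%N.
Proof.
rewrite leq_subLR addnC; apply: leq_trans mxrank_rowsub_cover _.
by rewrite leq_add2l rank_leq_row.
Qed.

End RowCover.

Lemma mxrank_colsub_cover_lb {F : fieldType} {p n a b : nat} (A : 'M[F]_(p, n))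
    (f : 'I_a -> 'I_n) (g : 'I_b -> 'I_n) :
  (forall j, (exists x, f x = j) \/ (exists y, g y = j)) ->
  (\rank A - b <= \rank (colsub f A))%N.
Proof.
move=> fg_cover; rewrite -[\rank A]mxrank_tr -[\rank (mxsub _ _ _)]mxrank_tr trmx_mxsub.
exact: mxrank_rowsub_cover_lb fg_cover.
Qed.

Lemma mxrank_colsub_le {F : fieldType} {p n a : nat} (A : 'M[F]_(p, n))
    (f : 'I_a -> 'I_n) :
  (\rank (colsub f A) <= \rank A)%N.
Proof.
rewrite -[\rank A]mxrank_tr -[\rank (mxsub _ _ _)]mxrank_tr trmx_mxsub.
exact/mxrankS/rowsub_sub.
Qed.

Section HankelColumns.
Variables (R : realType) (m L T : nat) (u : int -> 'cV[R]_m).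

Lemma col_succ_subproof (j : 'I_(T - L)) : (j.+1 < T - L + 1)%N.
Proof. by rewrite addn1 ltnS. Qed.

Definition col_succ (j : 'I_(T - L)) : 'I_(T - L + 1) := Ordinal (col_succ_subproof j).

Lemma col_first_subproof : (0 < T - L + 1)%N.
Proof. by rewrite addn1. Qed.

Definition col_first (j : 'I_1) : 'I_(T - L + 1) := Ordinal col_first_subproof.

Definition col_widen : 'I_(T - L) -> 'I_(T - L + 1) := widen_ord (leq_addr 1 _).

Lemma col_succ_first_cover (j : 'I_(T - L + 1)) :
  (exists x, col_succ x = j) \/ (exists y, col_first y = j).
Proof.
case: (posnP j) => [j0 | j_gt0]; first by right; exists ord0; apply/val_inj; rewrite /= j0.
have lt_j : (j.-1 < T - L)%N by have := ltn_ord j; lia.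
by left; exists (Ordinal lt_j); apply/val_inj => /=; lia.
Qed.

Lemma colsub_hankel_pred (k : int) :
  colsub col_succ (hankel L T u (k - 1)) = colsub col_widen (hankel L T u k).
Proof. by apply/matrixP => i j; rewrite !mxE; congr (u _ _ _); rewrite /=; lia. Qed.

End HankelColumns.

Section HankelBlocks.
Variables (R : realType) (m L T : nat) (u : int -> 'cV[R]_m).
Hypotheses (m_gt0 : (0 < m)%N) (L_gt0 : (0 < L)%N).

Lemma mulnL_pred_add : (m * (L - 1) + m = m * L)%N.
Proof. by rewrite mulnBr muln1 subnK // leq_pmulr. Qed.

Lemma row_shift_subproof (i : 'I_(m * (L - 1))) : (i + m < m * L)%N.
Proof. by rewrite -mulnL_pred_add ltn_add2r. Qed.

Definition row_shift (i : 'I_(m * (L - 1))) : 'I_(m * L) := Ordinal (row_shift_subproof i).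

Lemma top_row_subproof (i : 'I_m) : (i < m * L)%N.
Proof. by apply: leq_trans (ltn_ord i) _; rewrite leq_pmulr. Qed.

Definition top_row (i : 'I_m) : 'I_(m * L) := Ordinal (top_row_subproof i).

Lemma row_shift_top_row_cover (i : 'I_(m * L)) :
  (exists x, row_shift x = i) \/ (exists y, top_row y = i).
Proof.
case: (ltnP i m) => [lt_im | le_mi]; first by right; exists (Ordinal lt_im); apply/val_inj.
have lt_i_m : (i - m < m * (L - 1))%N by have := ltn_ord i; have := mulnL_pred_add; lia.
by left; exists (Ordinal lt_i_m); apply/val_inj => /=; lia.
Qed.

Lemma row_mx_H11_H12 (k : int) :
  row_mx (H11 L T u k) (H12 L T u k) = rowsub row_shift (hankel L T u (k - 1)).
Proof.
apply/matrixP => i j; rewrite /hankel /H11 /H12 !mxE.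
have -> : ((i + m) %/ m = (i %/ m).+1)%N by rewrite divnDr ?dvdnn // divnn m_gt0 addn1.
have -> : mod_ord (row_shift i) = mod_ord i by apply/val_inj => /=; rewrite modnDr.
case: splitP => j' /= def_j; rewrite ?mxE; congr (u _ _ _).
  by rewrite def_j; lia.
by have := ltn_ord j'; rewrite def_j; lia.
Qed.

Lemma col_mx_H11_H21 (k : int) :
  col_mx (H11 L T u k) (H21 L T u k)
  = castmx (esym mulnL_pred_add, erefl) (colsub (col_widen L T) (hankel L T u k)).
Proof.
apply/matrixP => i j; rewrite castmxE /hankel /H11 /H21 !mxE.
case: splitP => i' /= def_i; rewrite !mxE.
  congr (u _ _ _); first by rewrite def_i; lia.
  by apply/val_inj; rewrite /= def_i.
have -> : (i %/ m = L - 1)%N by rewrite def_i mulnC divnMDl // divn_small // addn0.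
by congr (u _ _ _); apply/val_inj; rewrite /= def_i (mulnC m) modnMDl modn_small.
Qed.

End HankelBlocks.

Theorem lemma1 (R : realType) (m L T : nat) (k : int) (u : int -> 'cV[R]_m) :
  (0 < m)%N -> (0 < L)%N -> (0 < T)%N -> ((m + 1) * L - 1 <= T)%N ->
  pers_exciting L T u (k - 1) ->
  [/\ \rank (row_mx (H11 L T u k) (H12 L T u k)) = (m * L - m)%N,
      (m * L - 1 <= \rank (col_mx (H11 L T u k) (H21 L T u k)) <= m * L)%N
    & (m * L - 1 <= \rank (hankel L T u k) <= m * L)%N].
Proof.
move=> m_gt0 L_gt0 _ _ PE.
have drop_col_lb :=
  mxrank_colsub_cover_lb (hankel L T u (k - 1)) _ _ (@col_succ_first_cover L T).
rewrite PE colsub_hankel_pred in drop_col_lb.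
split.
- have mL_sub_m : (m * L - m = m * (L - 1))%N.
    by rewrite -(mulnL_pred_add m L L_gt0) addnK.
  apply/eqP; rewrite row_mx_H11_H12 // eqn_leq {1}mL_sub_m rank_leq_row /= -{1}PE.
  exact: mxrank_rowsub_cover_lb _ _ _ (@row_shift_top_row_cover m L m_gt0 L_gt0).
- rewrite col_mx_H11_H21 // eqmx_cast drop_col_lb.
  by rewrite -mxrank_tr rank_leq_col.
- rewrite rank_leq_row andbT; apply: leq_trans drop_col_lb _.
  exact: (mxrank_colsub_le (hankel L T u k) (col_widen L T)).
Qed.
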